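(* Let $p\in\mathbb N$ and $c$ a constant, and consider the modified Bogoyavlensky lattice $$v'_j=(c-v_j)v_j\,(v_{j+1}\cdots v_{j+p}-v_{j-1}\cdots v_{j-p}),\qquad j\in\mathbb Z.$$ Let constants $b_j,d_j$, $j\in\mathbb Z$, satisfy $b_{j+p}=b_j+1$ and $d_{j+p+1}=d_j+c$, and define $$G_j=t(c-v_j)\Bigl(\sum_{s=0}^p v_{j-p+s}\cdots v_{j+s}-c\sum_{s=1}^p v_{j-p+s}\cdots v_{j+s-1}\Bigr)+b_jv_j-d_j.$$ Then the constraint $G_j=0$ (for all $j\in\mathbb Z$) is consistent with the lattice: the total derivative $\frac{d}{dt}G_j$ computed by virtue of the lattice equations (including the explicit dependence on $t$) vanishes whenever $G_k=0$ for all $k\in\mathbb Z$, so that the set of solutions satisfying all constraints $G_j=0$ is invariant under the flow.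
   Context: $f'=df/dt$. *)

From Stdlib Require Import Reals ZArith.
From Coquelicot Require Import Coquelicot.
Open Scope R_scope.

Fixpoint prodR (n : nat) (f : nat -> R) : R :=
  match n with O => 1 | S m => prodR m f * f m end.

Fixpoint sumR (n : nat) (f : nat -> R) : R :=
  match n with O => 0 | S m => sumR m f + f m end.

Definition bogo_rhs (c : R) (p : nat) (v : Z -> R) (j : Z) : R :=
  (c - v j) * v j *
  (prodR p (fun i => v (j + Z.of_nat (S i))%Z)
   - prodR p (fun i => v (j - Z.of_nat (S i))%Z)).

Definition Gcon (c : R) (p : nat) (b d : Z -> R) (t : R) (v : Z -> R) (j : Z) : R :=
  t * (c - v j) *
  (sumR (S p) (fun s => prodR (S p)
        (fun i => v (j - Z.of_nat p + Z.of_nat s + Z.of_nat i)%Z))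
   - c * sumR p (fun s => prodR p
        (fun i => v (j - Z.of_nat p + Z.of_nat (S s) + Z.of_nat i)%Z)))
  + b j * v j - d j.

(* Write A x and B x for the products of p+1 and of p consecutive v's starting at x, and
   S j for the bracket in G j, so that G j = t F j + b j v j - d j with F j = (c - v j) S j.
   Along the lattice v k has relative speed L k = (c - v k) (B (k+1) - B (k-p)), hence a
   product of consecutive v's has relative speed the sum of L over its window.  The heart of
   the argument is the identity
     dF j/dt = (c - v j) sum_(m<p) B (j-p+1+m) (F (j+1+m) - F (j-p+m)),
   obtained by telescoping the flux c B x A (x+p) - A x S (x+p); the remainders cancel by
   the overlap relation A x B (x+p+1) = B x A (x+p).  On the constraint set t F k = d k - b k v k, and
   then b (j+p) = b j + 1 and d (j+p+1) = d j + c make the remaining terms of dG j/dt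
   telescope to A (j-p) (1 + b (j-p) - b j) = 0. *)

From Stdlib Require Import Reals ZArith Lia Lra.
From Coquelicot Require Import Coquelicot.
Open Scope R_scope.

Local Coercion Z.of_nat : nat >-> Z.

Lemma sumR_ext n f g : (forall i, (i < n)%nat -> f i = g i) -> sumR n f = sumR n g.
Proof.
  induction n as [|n IH]; intros Hfg; simpl; [reflexivity|].
  rewrite IH, Hfg; [reflexivity | lia | intros; apply Hfg; lia].
Qed.

Lemma prodR_ext n f g : (forall i, (i < n)%nat -> f i = g i) -> prodR n f = prodR n g.
Proof.
  induction n as [|n IH]; intros Hfg; simpl; [reflexivity|].
  rewrite IH, Hfg; [reflexivity | lia | intros; apply Hfg; lia].
Qed.

Lemma sumR_sub n f g : sumR n (fun i => f i - g i) = sumR n f - sumR n g.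
Proof. induction n as [|n IH]; simpl; [|rewrite IH]; ring. Qed.

Lemma sumR_mult_l n a f : sumR n (fun i => a * f i) = a * sumR n f.
Proof. induction n as [|n IH]; simpl; [|rewrite IH]; ring. Qed.

Lemma sumR_succ_l n f : sumR (S n) f = f O + sumR n (fun i => f (S i)).
Proof. induction n as [|n IH]; simpl in *; [|rewrite IH]; ring. Qed.

Lemma prodR_succ_l n f : prodR (S n) f = f O * prodR n (fun i => f (S i)).
Proof. induction n as [|n IH]; simpl in *; [|rewrite IH]; ring. Qed.

Lemma sumR_telescope n f : sumR n (fun i => f (S i) - f i) = f n - f O.
Proof. induction n as [|n IH]; simpl; [|rewrite IH]; ring. Qed.

Definition sumZ (F : Z -> R) (a : Z) (n : nat) : R := sumR n (fun i => F (a + i)%Z).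

Lemma sumZ_succ_r F a n : sumZ F a (S n) = sumZ F a n + F (a + n)%Z.
Proof. reflexivity. Qed.

Lemma sumZ_succ_l F a n : sumZ F a (S n) = F a + sumZ F (a + 1) n.
Proof.
  unfold sumZ; rewrite sumR_succ_l; f_equal; [f_equal; lia|].
  apply sumR_ext; intros; f_equal; lia.
Qed.

Lemma sumZ_shift F a n : sumZ F (a + 1) n = sumZ F a n + F (a + n)%Z - F a.
Proof. pose proof (sumZ_succ_l F a n); rewrite sumZ_succ_r in *; lra. Qed.

Lemma sumZ_ext F G a n : (forall x, F x = G x) -> sumZ F a n = sumZ G a n.
Proof. intros HFG; apply sumR_ext; intros; apply HFG. Qed.

Lemma sumZ_translate F G m a n :
  (forall x, G x = F (x + m)%Z) -> sumZ G a n = sumZ F (a + m) n.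
Proof. intros HG; apply sumR_ext; intros; rewrite HG; f_equal; lia. Qed.

Lemma sumZ_sub F G a n : sumZ (fun x => F x - G x) a n = sumZ F a n - sumZ G a n.
Proof. apply sumR_sub. Qed.

Lemma sumZ_mult_l r F a n : sumZ (fun x => r * F x) a n = r * sumZ F a n.
Proof. apply sumR_mult_l. Qed.

Lemma sumZ_telescope F a n : sumZ (fun x => F (x + 1)%Z - F x) a n = F (a + n)%Z - F a.
Proof.
  pose proof (sumR_telescope n (fun i => F (a + i)%Z)) as T; cbv beta in T.
  replace (a + O)%Z with a in T by lia.
  rewrite <- T; apply sumR_ext; intros; do 2 f_equal; lia.
Qed.

(* Rewrites [lia]-equal [Z] arguments of the same function to one syntactic form,
   so that [ring] and [lra] see equal atoms. *)
Ltac unify_indices :=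
  repeat match goal with
  | |- context [?f ?x] =>
      lazymatch type of x with Z =>
      lazymatch type of (f x) with R => idtac | nat -> R => idtac end;
      match goal with
      | |- context [f ?y] =>
          assert_fails (constr_eq x y);
          assert_fails (idtac; match x with context [?z] => constr_eq z y end);
          let E := fresh in assert (E : y = x) by lia; rewrite E; clear E
      end end
  end.

Section Windows.
Variables (c : R) (p : nat) (v : Z -> R).

Definition window (a : Z) (n : nat) : R := prodR n (fun i => v (a + i)%Z).

Local Notation A a := (window a (S p)).
Local Notation B a := (window a p).

Lemma window_succ_r a n : window a (S n) = window a n * v (a + n)%Z.
Proof. reflexivity. Qed.

Lemma window_succ_l a n : window a (S n) = v a * window (a + 1) n.
Proof.
  unfold window; rewrite prodR_succ_l; f_equal; [f_equal; lia|].
  apply prodR_ext; intros; f_equal; lia.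
Qed.

Lemma window_rev j n : prodR n (fun i => v (j - S i)%Z) = window (j - n) n.
Proof.
  induction n as [|n IH]; [reflexivity|].
  cbn [prodR]; rewrite IH, window_succ_l.
  replace (j - S n + 1)%Z with (j - n)%Z by lia; ring.
Qed.

Lemma window_overlap a : A a * B (a + p + 1) = B a * A (a + p).
Proof. rewrite (window_succ_r a), (window_succ_l (a + p)); ring. Qed.

Definition bracket (k : Z) : R :=
  sumR (S p) (fun s => A (k - p + s)) - c * sumR p (fun s => B (k - p + S s)).

Lemma bracket_sumZ k :
  bracket k = sumZ (fun x => A x) (k - p) (S p) - c * sumZ (fun x => B x) (k - p + 1) p.
Proof.
  unfold bracket; do 2 f_equal; apply sumR_ext; intros; f_equal; lia.
Qed.

Lemma bracket_succ k :
  bracket (k + 1) = bracket k + A (k + 1) - A (k - p) - c * (B (k + 1) - B (k - p + 1)).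
Proof.
  rewrite !bracket_sumZ.
  replace (k + 1 - p)%Z with (k - p + 1)%Z by lia.
  rewrite (sumZ_shift (fun x => A x) (k - p) (S p)), (sumZ_shift (fun x => B x) (k - p + 1) p).
  unify_indices; ring.
Qed.

Definition log_rhs (k : Z) : R := (c - v k) * (B (k + 1) - B (k - p)).

Lemma bogo_rhs_log k : bogo_rhs c p v k = v k * log_rhs k.
Proof.
  unfold bogo_rhs, log_rhs; rewrite window_rev.
  rewrite (prodR_ext p _ (fun i => v (k + 1 + i)%Z)) by (intros; f_equal; lia).
  unfold window; ring.
Qed.

Lemma log_rhs_windows k : log_rhs k = c * B (k + 1) - A k - (c * B (k - p) - A (k - p)).
Proof.
  unfold log_rhs; rewrite (window_succ_l k), (window_succ_r (k - p)).
  replace (k - p + p)%Z with k by lia; ring.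
Qed.

Lemma bogo_rhs_windows k : bogo_rhs c p v k = (c - v k) * (A k - A (k - p)).
Proof.
  rewrite bogo_rhs_log; unfold log_rhs; rewrite (window_succ_l k), (window_succ_r (k - p)).
  replace (k - p + p)%Z with k by lia; ring.
Qed.

Lemma sum_log_rhs k :
  sumZ log_rhs k (S p) = bracket k - bracket (k + p) + c * (B (k + p + 1) - B (k - p)).
Proof.
  rewrite (sumZ_ext _ _ _ _ log_rhs_windows), !sumZ_sub, !sumZ_mult_l, !bracket_sumZ.
  rewrite (sumZ_translate (fun x => B x) (fun x => B (x + 1)%Z) 1) by reflexivity.
  rewrite (sumZ_translate (fun x => B x) (fun x => B (x - p)%Z) (- p))
    by (intros; f_equal; lia).
  rewrite (sumZ_translate (fun x => A x) (fun x => A (x - p)%Z) (- p))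
    by (intros; f_equal; lia).
  rewrite (sumZ_succ_r _ (k + 1)), (sumZ_succ_l (fun x => B x) (k + - p)).
  unify_indices; ring.
Qed.

Definition window_rate (a : Z) (n : nat) : R := window a n * sumZ log_rhs a n.

Definition bracket_rate (k : Z) : R :=
  sumZ (fun x => window_rate x (S p)) (k - p) (S p)
  - c * sumZ (fun x => window_rate x p) (k - p + 1) p.

Lemma bracket_rate_split k :
  bracket_rate k = window_rate k (S p)
    + sumZ (fun x => window_rate x (S p) - c * window_rate (x + 1) p) (k - p) p.
Proof.
  unfold bracket_rate; rewrite sumZ_succ_r, sumZ_sub, sumZ_mult_l.
  rewrite (sumZ_translate (fun x => window_rate x p) (fun x => window_rate (x + 1)%Z p) 1)
    by reflexivity.
  unify_indices; ring.
Qed.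

Definition flux (x : Z) : R := c * B x * A (x + p) - A x * bracket (x + p).

Lemma rate_flux_step x :
  window_rate x (S p) - c * window_rate (x + 1) p
  - ((c * B (x + 1) - A (x + 1)) * bracket (x + p + 1) - (c * B (x + 1) - A x) * bracket x)
  = flux x - flux (x + 1).
Proof.
  unfold window_rate, flux.
  pose proof (sumZ_succ_l log_rhs x p) as Hsplit.
  rewrite sum_log_rhs, log_rhs_windows in Hsplit.
  replace (sumZ log_rhs (x + 1) p) with
    (bracket x - bracket (x + p) + c * (B (x + p + 1) - B (x - p))
     - (c * B (x + 1) - A x - (c * B (x - p) - A (x - p)))) by lra.
  replace (x + 1 + p)%Z with (x + p + 1)%Z by lia.
  rewrite sum_log_rhs, (bracket_succ (x + p)).
  pose proof (f_equal (Rmult c) (window_overlap x)) as O1.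
  pose proof (f_equal (Rmult c) (window_overlap (x - p))) as O2.
  revert O1 O2; unify_indices; intros O1 O2.
  lra.
Qed.

Lemma rate_flux_boundary k :
  window_rate k (S p) - (A k - A (k - p)) * bracket k = flux k - flux (k - p).
Proof.
  unfold window_rate, flux; rewrite sum_log_rhs.
  pose proof (f_equal (Rmult c) (window_overlap k)) as O.
  revert O; unify_indices; intros O.
  lra.
Qed.

Lemma bracket_rate_in_brackets k :
  bracket_rate k - (A k - A (k - p)) * bracket k
  = sumZ (fun x => B (x + 1) * ((c - v (x + p + 1)) * bracket (x + p + 1) - (c - v x) * bracket x))
      (k - p) p.
Proof.
  rewrite (sumZ_ext _ (fun x => (c * B (x + 1) - A (x + 1)) * bracket (x + p + 1)
                                 - (c * B (x + 1) - A x) * bracket x)).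
  2: { intros x; rewrite (window_succ_l x), (window_succ_r (x + 1)); unify_indices; ring. }
  assert (T : sumZ (fun x => window_rate x (S p) - c * window_rate (x + 1) p
                 - ((c * B (x + 1) - A (x + 1)) * bracket (x + p + 1)
                    - (c * B (x + 1) - A x) * bracket x)) (k - p) p
              = flux (k - p) - flux (k - p + p)).
  { rewrite (sumZ_ext _ (fun x => -1 * (flux (x + 1) - flux x)))
      by (intros; rewrite rate_flux_step; ring).
    rewrite sumZ_mult_l, sumZ_telescope; ring. }
  rewrite sumZ_sub in T.
  pose proof (rate_flux_boundary k) as Hbd.
  rewrite bracket_rate_split.
  revert T Hbd; unify_indices; intros T Hbd.
  lra.
Qed.

Lemma bracket_balance (b d : Z -> R)
  (hb : forall j, b (j + p)%Z = b j + 1) (hd : forall j, d (j + p + 1)%Z = d j + c) k :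
  bracket k
  + sumZ (fun x => B (x + 1) * ((d (x + p + 1)%Z - b (x + p + 1)%Z * v (x + p + 1)%Z)
                                 - (d x - b x * v x))) (k - p) p
  + b k * (A k - A (k - p)) = 0.
Proof.
  rewrite (sumZ_ext _ (fun x => (c * B (x + 1) - A (x + 1))
                                 - (b (x + 1)%Z * A (x + 1) - b x * A x))).
  2: { intros x.
       assert (Hb : b (x + p + 1)%Z = b (x + 1)%Z + 1) by (rewrite <- hb; f_equal; lia).
       rewrite hd, Hb, (window_succ_l x), (window_succ_r (x + 1)); unify_indices; ring. }
  rewrite (sumZ_sub (fun x => c * B (x + 1) - A (x + 1))), sumZ_sub, sumZ_mult_l.
  rewrite (sumZ_telescope (fun x => b x * A x)).
  rewrite (sumZ_translate (fun x => B x) (fun x => B (x + 1)%Z) 1) by reflexivity.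
  rewrite (sumZ_translate (fun x => A x) (fun x => A (x + 1)%Z) 1) by reflexivity.
  rewrite bracket_sumZ, sumZ_succ_l.
  pose proof (hb (k - p)%Z) as Hb.
  revert Hb; unify_indices; intros Hb.
  rewrite Hb; ring.
Qed.

End Windows.

Lemma is_derive_Rplus (f g : R -> R) (x df dg : R) :
  is_derive f x df -> is_derive g x dg -> is_derive (fun y => f y + g y) x (df + dg).
Proof. intros; apply (is_derive_plus f g); assumption. Qed.

Lemma is_derive_Rminus (f g : R -> R) (x df dg : R) :
  is_derive f x df -> is_derive g x dg -> is_derive (fun y => f y - g y) x (df - dg).
Proof. intros; apply (is_derive_minus f g); assumption. Qed.

Lemma is_derive_Rmult (f g : R -> R) (x df dg : R) :
  is_derive f x df -> is_derive g x dg ->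
  is_derive (fun y => f y * g y) x (df * g x + f x * dg).
Proof. intros; apply (is_derive_mult f g); [assumption | assumption | exact Rmult_comm]. Qed.

Lemma is_derive_Rconst (a x : R) : is_derive (fun _ => a) x 0.
Proof. apply (is_derive_const a x). Qed.

Lemma is_derive_Rid (x : R) : is_derive (fun y => y) x 1.
Proof. apply (is_derive_id x). Qed.

Lemma is_derive_value (f : R -> R) (x l l' : R) : is_derive f x l -> l = l' -> is_derive f x l'.
Proof. intros H <-; exact H. Qed.

Lemma is_derive_affine (a b : R) : is_derive (fun s => a + s * b) 0 b.
Proof.
  eapply is_derive_value.
  - apply is_derive_Rplus; [apply is_derive_Rconst|].
    apply is_derive_Rmult; [apply is_derive_Rid | apply is_derive_Rconst].
  - simpl; ring.
Qed.

Lemma is_derive_sumR n (F : nat -> R -> R) (dF : nat -> R) (x : R) :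
  (forall i, is_derive (F i) x (dF i)) ->
  is_derive (fun s => sumR n (fun i => F i s)) x (sumR n dF).
Proof.
  intros HF; induction n as [|n IH]; simpl.
  - apply is_derive_Rconst.
  - apply is_derive_Rplus; [exact IH | apply HF].
Qed.

Lemma is_derive_prodR_rel n (x l : nat -> R) :
  is_derive (fun s => prodR n (fun i => x i + s * (x i * l i))) 0 (prodR n x * sumR n l).
Proof.
  induction n as [|n IH]; simpl.
  - eapply is_derive_value; [apply is_derive_Rconst | simpl; ring].
  - eapply is_derive_value; [apply is_derive_Rmult; [exact IH | apply is_derive_affine]|].
    cbv beta; rewrite (prodR_ext n (fun i => x i + 0 * (x i * l i)) x) by (intros; ring).
    ring.
Qed.

Lemma bracket_ext c p (v w : Z -> R) k :
  (forall x, v x = w x) -> bracket c p v k = bracket c p w k.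
Proof.
  intros Hvw; unfold bracket, window.
  f_equal; [|f_equal]; apply sumR_ext; intros; apply prodR_ext; intros; apply Hvw.
Qed.

Section Flow.
Variables (c : R) (p : nat) (v : Z -> R).

Local Notation flow s := (fun k => v k + s * bogo_rhs c p v k).

Lemma is_derive_window_flow a n :
  is_derive (fun s => window (flow s) a n) 0 (window_rate c p v a n).
Proof.
  apply (is_derive_ext
    (fun s => prodR n (fun i => v (a + i)%Z + s * (v (a + i)%Z * log_rhs c p v (a + i)%Z)))).
  { intros s; apply prodR_ext; intros; rewrite bogo_rhs_log; reflexivity. }
  apply (is_derive_prodR_rel n (fun i => v (a + i)%Z) (fun i => log_rhs c p v (a + i)%Z)).
Qed.

Lemma is_derive_bracket_flow k :
  is_derive (fun s => bracket c p (flow s) k) 0 (bracket_rate c p v k).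
Proof.
  apply (is_derive_ext (fun s => sumZ (fun x => window (flow s) x (S p)) (k - p) (S p)
                                 - c * sumZ (fun x => window (flow s) x p) (k - p + 1) p)).
  { intros s; symmetry; apply bracket_sumZ. }
  unfold bracket_rate, sumZ; apply is_derive_Rminus; [|apply is_derive_scal];
    apply is_derive_sumR; intros; apply is_derive_window_flow.
Qed.

Lemma is_derive_Gcon_flow b d t j :
  is_derive (fun s => Gcon c p b d (t + s) (flow s) j) 0
    ((c - v j) * (bracket c p v j
       + t * (bracket_rate c p v j - (window v j (S p) - window v (j - p) (S p)) * bracket c p v j)
       + b j * (window v j (S p) - window v (j - p) (S p)))).
Proof.
  apply (is_derive_ext (fun s => (t + s) * (c - (v j + s * bogo_rhs c p v j))
                                 * bracket c p (flow s) j
                                 + b j * (v j + s * bogo_rhs c p v j) - d j));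
    [reflexivity|].
  eapply is_derive_value.
  - apply is_derive_Rminus; [apply is_derive_Rplus | apply is_derive_Rconst].
    + apply is_derive_Rmult; [apply is_derive_Rmult | apply is_derive_bracket_flow].
      * apply is_derive_Rplus; [apply is_derive_Rconst | apply is_derive_Rid].
      * apply is_derive_Rminus; [apply is_derive_Rconst | apply is_derive_affine].
    + apply is_derive_Rmult; [apply is_derive_Rconst | apply is_derive_affine].
  - cbv beta; rewrite (bracket_ext c p _ v) by (intros; ring).
    rewrite bogo_rhs_windows; ring.
Qed.

End Flow.

Theorem mainTheorem7 (p : nat) (c : R) (b d : Z -> R)
  (hb : forall j : Z, b (j + Z.of_nat p)%Z = b j + 1)
  (hd : forall j : Z, d (j + Z.of_nat p + 1)%Z = d j + c) :
  forall (t : R) (v : Z -> R),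
    (forall k : Z, Gcon c p b d t v k = 0) ->
    forall j : Z,
      is_derive
        (fun s : R => Gcon c p b d (t + s) (fun k => v k + s * bogo_rhs c p v k) j)
        0 0.
Proof.
  intros t v HG j.
  assert (HF : forall k, t * ((c - v k) * bracket c p v k) = d k - b k * v k).
  { intros k; specialize (HG k).
    change (t * (c - v k) * bracket c p v k + b k * v k - d k = 0) in HG; lra. }
  eapply is_derive_value; [apply is_derive_Gcon_flow|].
  rewrite bracket_rate_in_brackets, <- sumZ_mult_l.
  rewrite (sumZ_ext _ (fun x => window v (x + 1) p
             * ((d (x + p + 1)%Z - b (x + p + 1)%Z * v (x + p + 1)%Z) - (d x - b x * v x))))
    by (intros; rewrite <- !HF; ring).
  rewrite (bracket_balance c p v b d hb hd j); ring.
Qed.
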